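(* Let $K$ be a finite field and $G$ a finite group. Every maximal right ideal of $KG$ is checkable.
   Context: A right ideal $I\le KG$ is called checkable if there is $v\in KG$ with $I=\{a\in KG: va=0\}$. *)

(* The group algebra KG of a finite group G (= the whole
   finGroupType gT) over a finite field K is modelled as the K-valued
   functions on G, {ffun gT -> K}, with pointwise addition (the canonical
   zmodType on ffun) and convolution product
     (a * b)(g) = \sum_h a(h) b(h^-1 g),
   i.e. a = \sum_g a(g) g. *)
From HB Require Import structures.
From mathcomp Require Import all_boot all_order all_algebra all_fingroup.
Set Implicit Arguments. Unset Strict Implicit. Unset Printing Implicit Defensive.
Import GRing.Theory.
Local Open Scope ring_scope.

Section GroupAlgebra.
Variables (K : fieldType) (gT : finGroupType).

Definition KG := {ffun gT -> K}.

Definition kgmul (a b : KG) : KG :=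
  [ffun g => \sum_(h : gT) a h * b (h^-1 * g)%g].

Definition right_ideal (I : KG -> Prop) : Prop :=
  [/\ I 0,
      (forall a b, I a -> I b -> I (a - b)) &
      (forall a r, I a -> I (kgmul a r))].

Definition maximal_right_ideal (I : KG -> Prop) : Prop :=
  [/\ right_ideal I,
      (exists a, ~ I a) &
      (forall J, right_ideal J -> (forall a, I a -> J a) ->
         (forall a, J a -> I a) \/ (forall a, J a))].

Definition checkable (I : KG -> Prop) : Prop :=
  exists v : KG, forall a, I a <-> kgmul v a = 0.

End GroupAlgebra.

From HB Require Import structures.
From mathcomp Require Import all_boot all_order all_algebra all_fingroup all_field.
From Stdlib Require Import ClassicalEpsilon.
Set Implicit Arguments. Unset Strict Implicit. Unset Printing Implicit Defensive.
Import GRing.Theory.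
Local Open Scope ring_scope.

(* Idea: I is a proper K-subspace of the finite-dimensional space KG, so some
   nonzero linear functional vanishes on I.  Every functional on KG has the form
   x |-> (v x)(1) = \sum_h v(h) x(h^-1) for a unique v in KG.  Since I is a right
   ideal, (v x)(g) = (v (x g^-1))(1) = 0 for all x in I and g in G, so I is
   contained in the right annihilator ann(v), which is a right ideal, and a
   proper one because v = v * 1 is nonzero.  Maximality forces I = ann(v). *)

(* A matrix of rank smaller than its number of columns kills a nonzero
   column vector: take a nonzero column of its cokernel. *)
Lemma rank_lt_kernel_col (F : fieldType) (m n : nat) (A : 'M[F]_(m, n)) :
  (\rank A < n)%N -> exists2 c : 'cV_n, c != 0 & A *m c = 0.
Proof.
move=> rkA; have coker0 : cokermx A != 0.
  by rewrite -mxrank_eq0 mxrank_coker -lt0n subn_gt0.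
have [j colj0] : exists j, col j (cokermx A) != 0.
  apply/existsP; apply: contraR coker0 => /existsPn col0.
  apply/eqP/matrixP => i j; have /negbNE/eqP/matrixP/(_ i 0) := col0 j.
  by rewrite !mxE.
by exists (col j (cokermx A)); rewrite // colE mulmxA mulmx_coker mul0mx.
Qed.

(* The functional is read
   off a kernel vector of the matrix whose rows are all the elements of S:
   that matrix cannot have full column rank, else S would be everything. *)
Lemma proper_subspace_annihilator (K : finFieldType) (T : finType)
    (S : {ffun T -> K} -> Prop) :
  S 0 -> (forall a b, S a -> S b -> S (a + b)) ->
  (forall k a, S a -> S [ffun t => a t * k]) -> (exists a, ~ S a) ->
  exists2 w : {ffun T -> K}, w != 0 & forall x, S x -> \sum_t w t * x t = 0.
Proof.
move=> S0 SD SZ [x0 notSx0].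
have Ssum (J : finType) (F : J -> {ffun T -> K}) :
    (forall j, S (F j)) -> S (\sum_j F j).
  by move=> SF; apply: (big_ind S) => // a b; exact: SD.
pose sel x : {ffun T -> K} := if excluded_middle_informative (S x) then x else 0.
have Ssel x : S (sel x) by rewrite /sel; case: excluded_middle_informative.
have selE x : S x -> sel x = x.
  by rewrite /sel; case: excluded_middle_informative.
pose A : 'M[K]_(#|{: {ffun T -> K}}|, #|T|) :=
  \matrix_(j, i) sel (enum_val j) (enum_val i).
have rkA : (\rank A < #|T|)%N.
  rewrite ltn_neqAle rank_leq_col andbT; apply/negP => /eqP fullA.
  have /submxP [D x0D] : (\row_i x0 (enum_val i) <= A)%MS.
    by apply: submx_full; rewrite /row_full fullA.
  apply: notSx0; suff -> : x0 = \sum_j [ffun t => sel (enum_val j) t * D 0 j].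
    by apply: Ssum => j; apply: SZ.
  apply/ffunP => t; rewrite sum_ffunE.
  have := congr1 (fun M : 'rV_#|T| => M 0 (enum_rank t)) x0D.
  rewrite /= !mxE enum_rankK => ->.
  by apply: eq_bigr => j _; rewrite !mxE ffunE enum_rankK mulrC.
have [c c0 Ac] := rank_lt_kernel_col rkA.
exists [ffun t => c (enum_rank t) 0].
  apply: contra c0 => /eqP/ffunP w0; apply/eqP/matrixP => i j.
  by have := w0 (enum_val i); rewrite !ffunE enum_valK ord1 mxE.
move=> x Sx.
have := congr1 (fun M : 'cV_#|{: {ffun T -> K}}| => M (enum_rank x) 0) Ac.
rewrite !mxE => Axc; rewrite -[RHS]Axc.
rewrite (reindex (fun i : 'I_#|T| => enum_val i)) /=; last first.
  by exists enum_rank => i _; [exact: enum_valK | exact: enum_rankK].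
by apply: eq_bigr => i _; rewrite mxE ffunE enum_valK enum_rankK selE // mulrC.
Qed.

Section GroupAlgebraArithmetic.
Variables (K : fieldType) (gT : finGroupType).
Local Notation KG := (KG K gT).
Local Notation kgmul := (@kgmul K gT).

Definition kgdelta (g0 : gT) (k : K) : KG := [ffun g => if g == g0 then k else 0].

Lemma kgmul_delta (x : KG) g0 k g : kgmul x (kgdelta g0 k) g = x (g * g0^-1)%g * k.
Proof.
rewrite ffunE (bigD1 (g * g0^-1)%g) //= big1 ?addr0.
  by rewrite ffunE invMg invgK mulgVK eqxx.
move=> h hne; rewrite ffunE; case: eqP => [e|]; last by rewrite mulr0.
by case/eqP: hne; rewrite -e invMg invgK mulKVg.
Qed.

Lemma kgmul1r (x : KG) : kgmul x (kgdelta 1 1) = x.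
Proof. by apply/ffunP => g; rewrite kgmul_delta invg1 mulg1 mulr1. Qed.

Lemma kgmul0r (v : KG) : kgmul v 0 = 0.
Proof. by apply/ffunP=> g; rewrite !ffunE big1 // => h _; rewrite ffunE mulr0. Qed.

Lemma kgmul0l (r : KG) : kgmul 0 r = 0.
Proof. by apply/ffunP=> g; rewrite !ffunE big1 // => h _; rewrite ffunE mul0r. Qed.

Lemma kgmulBr (v a b : KG) : kgmul v (a - b) = kgmul v a - kgmul v b.
Proof.
apply/ffunP=> g; rewrite !ffunE -sumrB; apply: eq_bigr => h _.
by rewrite !ffunE mulrBr.
Qed.

Lemma kgmulA (v a r : KG) : kgmul (kgmul v a) r = kgmul v (kgmul a r).
Proof.
apply/ffunP=> g; rewrite !ffunE.
under eq_bigr do rewrite ffunE mulr_suml.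
rewrite exchange_big /=; apply: eq_bigr => h _.
symmetry; rewrite ffunE mulr_sumr (reindex_inj (mulgI h^-1)%g) /=.
apply: eq_bigr => m _; rewrite mulrA; congr (_ * _ * r _).
by rewrite invMg invgK mulgA mulgK.
Qed.

Lemma kgmul_coeff1 (v x : KG) : kgmul v x 1%g = \sum_h v h * x (h^-1)%g.
Proof. by rewrite ffunE; apply: eq_bigr => h _; rewrite mulg1. Qed.

Lemma right_idealD (I : KG -> Prop) :
  right_ideal I -> forall a b, I a -> I b -> I (a + b).
Proof.
case=> I0 IB _ a b Ia Ib; rewrite -[b]opprK -[- b]sub0r.
by apply: (IB) => //; apply: IB.
Qed.

Lemma right_idealZ (I : KG -> Prop) :
  right_ideal I -> forall k a, I a -> I [ffun g => a g * k].
Proof.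
case=> _ _ IM k a /(IM _ (kgdelta 1 k)).
by congr I; apply/ffunP => g; rewrite kgmul_delta ffunE invg1 mulg1.
Qed.

Definition annihilator (v : KG) (a : KG) : Prop := kgmul v a = 0.

Lemma annihilator_right_ideal (v : KG) : right_ideal (annihilator v).
Proof.
split; rewrite /annihilator.
- exact: kgmul0r.
- by move=> a b va vb; rewrite kgmulBr va vb subrr.
- by move=> a r va; rewrite -kgmulA va kgmul0l.
Qed.

Lemma annihilator_proper (v : KG) : v != 0 -> ~ annihilator v (kgdelta 1 1).
Proof. by rewrite /annihilator kgmul1r => /eqP. Qed.

(* if the functional x |-> (v x)(1) vanishes on a right ideal I, then all of
   v x vanishes: (v x)(g) = (v (x g^-1))(1) and x g^-1 lies in I *)
Lemma right_ideal_sub_annihilator (I : KG -> Prop) (v : KG) :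
  right_ideal I -> (forall x, I x -> kgmul v x 1%g = 0) ->
  forall x, I x -> annihilator v x.
Proof.
case=> _ _ IM v1 x Ix; apply/ffunP => g.
rewrite [RHS]ffunE -(v1 _ (IM x (kgdelta g^-1 1) Ix)) !ffunE.
by apply: eq_bigr => h _; rewrite kgmul_delta invgK mulr1 mulg1.
Qed.

Lemma maximal_right_ideal_sub (I J : KG -> Prop) :
  maximal_right_ideal I -> right_ideal J -> (forall a, I a -> J a) ->
  (exists a, ~ J a) -> forall a, J a -> I a.
Proof.
case=> _ _ Imax RJ IJ [a notJa].
by case: (Imax J RJ IJ) => // Jall; case: notJa.
Qed.

End GroupAlgebraArithmetic.

Theorem mainTheorem6 (K : finFieldType) (gT : finGroupType)
  (I : KG K gT -> Prop) :
  maximal_right_ideal I -> checkable I.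
Proof.
move=> maxI; have [RI properI _] := maxI; have [I0 _ _] := RI.
have [w w0 wI] := proper_subspace_annihilator I0 (right_idealD RI)
  (right_idealZ RI) properI.
(* the functional w corresponds to v = \sum_h w(h^-1) h *)
pose v : KG K gT := [ffun h => w (h^-1)%g].
have v0 : v != 0.
  apply: contra w0 => /eqP/ffunP v0; apply/eqP/ffunP => g.
  by have := v0 g^-1%g; rewrite !ffunE invgK.
have Iv : forall x, I x -> annihilator v x.
  apply: right_ideal_sub_annihilator => // x Ix.
  rewrite kgmul_coeff1 -[RHS](wI x Ix) (reindex_inj invg_inj) /=.
  by apply: eq_bigr => h _; rewrite ffunE invgK.
exists v => a; split; first exact: Iv.
apply: maximal_right_ideal_sub (annihilator_right_ideal v) Iv _ _ => //.
by exists (kgdelta 1 1); apply: annihilator_proper.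
Qed.
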